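(* Let $\bm X=X_1\times\cdots\times X_n\in\mathbb{IR}^n$ with $\operatorname{wid}(X_i)>0$ for at least one $i$; define $\mathcal P=\{j:\operatorname{wid}(X_j)>0\}$, $\theta_i=\operatorname{wid}(X_i)/\sum_{j\in\mathcal P}\operatorname{wid}(X_j)$ for $i\in\mathcal P$, $\underline\sigma=\sum_i\underline X_i$, $\overline\sigma=\sum_i\overline X_i$. Let $\varphi:[\underline\sigma,\overline\sigma]\to\mathbb{R}$ be convex and let $\sigma^\ast\in[\underline\sigma,\overline\sigma]$ be a minimizer of $\varphi$ on $[\underline\sigma,\overline\sigma]$. Define, for $i\in\mathcal P$ and $x_i\in X_i$, $$f^{\rm u}_i(x_i)=\varphi\big(\min\{x_i-\overline X_i+\overline\sigma,\sigma^\ast\}\big)+\varphi\big(\max\{x_i-\underline X_i+\underline\sigma,\sigma^\ast\}\big)-(2-\theta_i)\varphi(\sigma^\ast),$$ and $f^{\rm u}_i\equiv 0$ for $i\notin\mathcal P$. Then (i) $\sum_{i=1}^n f^{\rm u}_i(x_i)\le\varphi\big(\sum_{i=1}^n x_i\big)$ for all $\bm x\in\bm X$; and (ii) $\sum_{i=1}^n f^{\rm u}_i(x_i)=\varphi(\sigma^\ast)$ at every $\bm x\in\bm X$ satisfying $x_i\in[\sigma^\ast+\overline X_i-\overline\sigma,\ \sigma^\ast+\underline X_i-\underline\sigma]$ for all $i$.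
   Context: $\mathbb{IR}^n$ is the set of boxes $\bm X=X_1\times\cdots\times X_n$ with $X_i=[\underline X_i,\overline X_i]$ compact real intervals; $\operatorname{wid}(X_i)=\overline X_i-\underline X_i$. *)

From mathcomp Require Import all_boot all_order all_algebra.
Set Implicit Arguments. Unset Strict Implicit. Unset Printing Implicit Defensive.
Import Order.TTheory GRing.Theory Num.Theory.
Local Open Scope ring_scope.

(* Boxes in IR^n are given by lower/upper endpoint functions lo, hi : 'I_n -> R
   with lo i <= hi i. *)

Definition wid (R : realDomainType) (n : nat) (lo hi : 'I_n -> R) (i : 'I_n) : R :=
  hi i - lo i.

Definition convex_on (R : realFieldType) (a b : R) (phi : R -> R) : Prop :=
  forall x y t : R, a <= x <= b -> a <= y <= b -> 0 <= t <= 1 ->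
    phi (t * x + (1 - t) * y) <= t * phi x + (1 - t) * phi y.

Definition fu (R : realFieldType) (n : nat) (lo hi : 'I_n -> R) (phi : R -> R)
  (sstar : R) (i : 'I_n) (xi : R) : R :=
  let slo := \sum_(j < n) lo j in
  let shi := \sum_(j < n) hi j in
  let W := \sum_(j < n | 0 < wid lo hi j) wid lo hi j in
  let theta := wid lo hi i / W in
  if 0 < wid lo hi i then
    phi (Num.min (xi - hi i + shi) sstar) + phi (Num.max (xi - lo i + slo) sstar)
      - (2 - theta) * phi sstar
  else 0.

From mathcomp Require Import all_boot all_order all_algebra ring lra.
Import Order.TTheory GRing.Theory Num.Theory.
Local Open Scope ring_scope.

Set Implicit Arguments.
Unset Strict Implicit.
Unset Printing Implicit Defensive.

(* Since the weights theta_i sum to 1, the sum of the f^u_i equals phi s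
   plus two sums of increments phi (s + d_i) - phi s, where s is the
   minimiser sigma^*, with all d_i <= 0 in the "min" sum and all d_i >= 0 in
   the "max" sum.  If s <= sum x, the "min" sum vanishes and the shifts d_i of
   the "max" sum add up to at most sum x - s; increments of a convex function
   along shifts of one sign are superadditive, and phi is nondecreasing to
   the right of its minimiser, so the "max" sum is at most
   phi (sum x) - phi s.  The case sum x <= s is the mirror image of this one
   under t |-> -t. *)

Section Convexity.
Variable R : realFieldType.
Implicit Types (A B m : R) (phi : R -> R).

Lemma convex_on_opp A B phi :
  convex_on A B phi -> convex_on (- B) (- A) (fun t => phi (- t)).
Proof.
move=> cvx x y t hx hy ht.
rewrite opprD -!mulrN; apply: cvx => //; lra.
Qed.

Lemma convex_increment_add A B m phi (d1 d2 : R) :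
  convex_on A B phi -> A <= m <= B -> A <= m + (d1 + d2) <= B ->
  (0 <= d1 /\ 0 <= d2) \/ (d1 <= 0 /\ d2 <= 0) ->
  phi (m + d1) + phi (m + d2) <= phi (m + (d1 + d2)) + phi m.
Proof.
move=> cvx hm hmd hsign.
have [d0|dN0] := eqVneq (d1 + d2) 0.
  have [-> ->] : d1 = 0 /\ d2 = 0 by lra.
  by rewrite !addr0.
set t := d1 / (d1 + d2).
have ht : 0 <= t <= 1.
  rewrite /t; case: hsign => [[h1 h2]|[h1 h2]].
    have dpos : 0 < d1 + d2 by rewrite lt_def dN0 /=; lra.
    by rewrite divr_ge0 ?ler_pdivrMr //=; lra.
  have dneg : d1 + d2 < 0 by rewrite lt_def eq_sym dN0 /=; lra.
  by rewrite ler_ndivlMr // ler_ndivrMr //; lra.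
have E1 : m + d1 = t * (m + (d1 + d2)) + (1 - t) * m by rewrite /t; field.
have E2 : m + d2 = (1 - t) * (m + (d1 + d2)) + (1 - (1 - t)) * m.
  by rewrite /t; field.
have := cvx _ _ _ hmd hm ht; have := cvx _ _ (1 - t) hmd hm.
rewrite E1 E2; lra.
Qed.

Lemma convex_increment_sum A B m phi (I : Type) (r : seq I) (d : I -> R) :
  convex_on A B phi -> A <= m <= B ->
  (forall i, 0 <= d i) \/ (forall i, d i <= 0) ->
  A <= m + \sum_(i <- r) d i <= B ->
  \sum_(i <- r) (phi (m + d i) - phi m) <= phi (m + \sum_(i <- r) d i) - phi m.
Proof.
move=> cvx hm hsign; elim: r => [|j r IHr].
  by rewrite !big_nil addr0 subrr.
rewrite !big_cons; set D := \sum_(i <- r) d i => hjD.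
have [hD hsignjD] : A <= m + D <= B /\
    ((0 <= d j /\ 0 <= D) \/ (d j <= 0 /\ D <= 0)).
  case: hsign => hd; have := hd j.
    have : 0 <= D by exact: sumr_ge0.
    by split; [lra | left; lra].
  have : D <= 0 by exact: sumr_le0.
  by split; [lra | right; lra].
have := IHr hD; have := convex_increment_add cvx hm hjD hsignjD; lra.
Qed.

Lemma convex_minimizer_between_le A B m phi (y z : R) :
  convex_on A B phi -> A <= m <= B ->
  (forall s, A <= s <= B -> phi m <= phi s) -> A <= y <= B ->
  m <= z <= y \/ y <= z <= m -> phi z <= phi y.
Proof.
move=> cvx hm min_m hy hz.
have := min_m _ hy.
have [ym|yNm] := eqVneq y m.
  by rewrite ym in hz *; have -> : z = m by lra.
set t := (z - m) / (y - m).
have ymN0 : y - m != 0 by rewrite subr_eq0.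
have ht : 0 <= t <= 1.
  rewrite /t; case: hz => /andP[h1 h2].
    have ympos : 0 < y - m by rewrite lt_def ymN0 /=; lra.
    by rewrite divr_ge0 ?ler_pdivrMr //=; lra.
  have ymneg : y - m < 0 by rewrite lt_def eq_sym ymN0 /=; lra.
  by rewrite ler_ndivlMr // ler_ndivrMr //; lra.
have -> : z = t * y + (1 - t) * m by rewrite /t; field.
have := cvx _ _ _ hy hm ht; nra.
Qed.

End Convexity.

Section Sums.
Variable R : realFieldType.

Lemma sum_pos_weights (n : nat) (F : 'I_n -> R) :
  (exists i, 0 < F i) ->
  \sum_i (if 0 < F i then F i / \sum_(j | 0 < F j) F j else 0) = 1.
Proof.
case=> i0 Fi0_gt0; rewrite -big_mkcond /= -mulr_suml divff // gt_eqF //.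
rewrite (bigD1 i0) //= ltr_pwDl //; apply: sumr_ge0 => i /andP[+ _].
exact: ltW.
Qed.

Lemma ler_sum_term (n : nat) (F : 'I_n -> R) (i : 'I_n) :
  (forall j, 0 <= F j) -> F i <= \sum_j F j.
Proof. by move=> F_ge0; rewrite (bigD1 i) //= lerDl sumr_ge0. Qed.

Lemma sum_max_subr0_le (I : Type) (r : seq I) (v : I -> R) (c : R) :
  0 <= c -> (forall i, 0 <= v i) ->
  \sum_(i <- r) Num.max (v i - c) 0 <= Num.max (\sum_(i <- r) v i - c) 0.
Proof.
move=> c_ge0 v_ge0; elim: r => [|j r IHr].
  by rewrite !big_nil; case: (leP (0 - c) 0); lra.
rewrite !big_cons; set V := \sum_(i <- r) v i in IHr *.
have := v_ge0 j; have : 0 <= V by exact: sumr_ge0.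
move: IHr; case: (leP (v j - c) 0); case: (leP (V - c) 0);
  case: (leP (v j + V - c) 0); lra.
Qed.

End Sums.

Section Arms.
Variables (R : realFieldType) (n : nat).
Implicit Types (lo hi x : 'I_n -> R) (phi : R -> R).

Lemma sum_upper_arm_le lo x B m phi :
  convex_on (\sum_i lo i) B phi -> \sum_i lo i <= m <= B ->
  (forall s, \sum_i lo i <= s <= B -> phi m <= phi s) ->
  (forall i, lo i <= x i) -> m <= \sum_i x i <= B ->
  \sum_i (phi (Num.max (x i - lo i + \sum_j lo j) m) - phi m)
    <= phi (\sum_i x i) - phi m.
Proof.
move=> cvx hm min_m lo_x hS.
set A := \sum_i lo i in cvx hm min_m *; set S := \sum_i x i in hS *.
pose d i := Num.max (x i - lo i - (m - A)) 0.
have d_ge0 i : 0 <= d i by rewrite /d le_max lexx orbT.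
have arm_d i : Num.max (x i - lo i + A) m = m + d i.
  rewrite /d; case: (leP (x i - lo i + A) m);
  case: (leP (x i - lo i - (m - A)) 0); lra.
have sum_d : \sum_i d i <= S - m.
  have : \sum_i d i <= Num.max (\sum_i (x i - lo i) - (m - A)) 0.
    by apply: sum_max_subr0_le => [|i]; rewrite ?subr_ge0 ?lo_x //; lra.
  by rewrite sumrB -/A -/S; case: (leP (S - A - (m - A)) 0); lra.
have sum_d_ge0 : 0 <= \sum_i d i by apply: sumr_ge0 => i _.
have md_in : A <= m + \sum_i d i <= B by lra.
rewrite (eq_bigr (fun i => phi (m + d i) - phi m)) => [|i _]; last first.
  by rewrite arm_d.
have := convex_increment_sum (r := index_enum 'I_n) cvx hm (or_introl d_ge0)
  md_in.
have S_in : A <= S <= B by lra.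
have := convex_minimizer_between_le cvx hm min_m S_in (z := m + \sum_i d i).
lra.
Qed.

Lemma sum_lower_arm_le hi x A m phi :
  convex_on A (\sum_i hi i) phi -> A <= m <= \sum_i hi i ->
  (forall s, A <= s <= \sum_i hi i -> phi m <= phi s) ->
  (forall i, x i <= hi i) -> A <= \sum_i x i <= m ->
  \sum_i (phi (Num.min (x i - hi i + \sum_j hi j) m) - phi m)
    <= phi (\sum_i x i) - phi m.
Proof.
move=> cvx hm min_m x_hi hS.
have := @sum_upper_arm_le (fun i => - hi i) (fun i => - x i) (- A) (- m)
  (fun t => phi (- t)).
rewrite !sumrN !opprK => /(_ (convex_on_opp cvx)) upper.
rewrite (eq_bigr (fun i =>
    phi (- Num.max (- x i - - hi i - \sum_j hi j) (- m)) - phi m)) => [|i _].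
  apply: upper => [|s hs|i|]; first lra.
  - by apply: min_m; lra.
  - by rewrite lerN2.
  - lra.
by rewrite oppr_max !opprD !opprK.
Qed.

End Arms.

Section Underestimator.
Variables (R : realFieldType) (n : nat) (lo hi : 'I_n -> R).
Variables (phi : R -> R) (s : R).
Hypothesis lo_le_hi : forall i, lo i <= hi i.
Hypothesis s_in : \sum_i lo i <= s <= \sum_i hi i.

Local Notation slo := (\sum_(i < n) lo i).
Local Notation shi := (\sum_(i < n) hi i).
Local Notation lower_arm x i := (Num.min (x i - hi i + shi) s).
Local Notation upper_arm x i := (Num.max (x i - lo i + slo) s).

Hypothesis some_wid_pos : exists i, 0 < wid lo hi i.

Lemma sum_fu_arms (x : 'I_n -> R) :
  (forall i, lo i <= x i <= hi i) ->
  \sum_i fu lo hi phi s i (x i) =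
  \sum_i (phi (lower_arm x i) - phi s) + \sum_i (phi (upper_arm x i) - phi s)
    + phi s.
Proof.
move=> x_in; have theta1 := sum_pos_weights some_wid_pos.
rewrite -[X in _ + X](mul1r (phi s)) -theta1 mulr_suml -!big_split /=.
apply: eq_bigr => i _; rewrite /fu /=; case: ifP => [_|]; first by ring.
move/negbT; rewrite -leNgt /wid => wid_le0.
have [-> ->] : x i = hi i /\ lo i = hi i.
  by have := x_in i; have := lo_le_hi i; lra.
have /andP[slo_s s_shi] := s_in.
by rewrite subrr !add0r min_r // max_r // !subrr mul0r !addr0.
Qed.

Lemma lower_arm_id (x : 'I_n -> R) i :
  (forall j, x j <= hi j) -> s <= \sum_j x j -> lower_arm x i = s.
Proof.
move=> x_hi hS; apply: min_r.
have : hi i - x i <= \sum_j (hi j - x j).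
  by apply: ler_sum_term => j; rewrite subr_ge0.
rewrite sumrB; lra.
Qed.

Lemma upper_arm_id (x : 'I_n -> R) i :
  (forall j, lo j <= x j) -> \sum_j x j <= s -> upper_arm x i = s.
Proof.
move=> lo_x hS; apply: max_r.
have : x i - lo i <= \sum_j (x j - lo j).
  by apply: ler_sum_term => j; rewrite subr_ge0.
rewrite sumrB; lra.
Qed.

Lemma sum_fu_le (x : 'I_n -> R) :
  convex_on slo shi phi -> (forall t, slo <= t <= shi -> phi s <= phi t) ->
  (forall i, lo i <= x i <= hi i) ->
  \sum_i fu lo hi phi s i (x i) <= phi (\sum_i x i).
Proof.
move=> cvx min_s x_in; rewrite sum_fu_arms //.
have lo_x i : lo i <= x i by case/andP: (x_in i).
have x_hi i : x i <= hi i by case/andP: (x_in i).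
have slo_S : slo <= \sum_i x i by exact: ler_sum.
have S_shi : \sum_i x i <= shi by exact: ler_sum.
have [s_S|S_s] := leP s (\sum_i x i).
  rewrite big1 => [|i _]; last by rewrite lower_arm_id ?subrr.
  have := sum_upper_arm_le cvx s_in min_s lo_x; rewrite s_S S_shi; lra.
rewrite [X in _ + X + _]big1 => [|i _]; last first.
  by rewrite upper_arm_id ?subrr ?ltW.
have := sum_lower_arm_le cvx s_in min_s x_hi; rewrite slo_S ltW //; lra.
Qed.

Lemma sum_fu_id (x : 'I_n -> R) :
  (forall i, lo i <= x i <= hi i) ->
  (forall i, s + hi i - shi <= x i <= s + lo i - slo) ->
  \sum_i fu lo hi phi s i (x i) = phi s.
Proof.
move=> x_in x_flat; rewrite sum_fu_arms //.
have lower_s : \sum_i (phi (lower_arm x i) - phi s) = 0.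
  by apply: big1 => i _; rewrite min_r ?subrr //; have := x_flat i; lra.
have upper_s : \sum_i (phi (upper_arm x i) - phi s) = 0.
  by apply: big1 => i _; rewrite max_r ?subrr //; have := x_flat i; lra.
by rewrite lower_s upper_s !add0r.
Qed.

End Underestimator.

Theorem mainTheorem5 (R : realFieldType) (n : nat) (lo hi : 'I_n -> R)
  (phi : R -> R) (sstar : R) :
  (forall i, lo i <= hi i) ->
  (exists i, 0 < wid lo hi i) ->
  convex_on (\sum_(i < n) lo i) (\sum_(i < n) hi i) phi ->
  (\sum_(i < n) lo i <= sstar <= \sum_(i < n) hi i) ->
  (forall s, \sum_(i < n) lo i <= s <= \sum_(i < n) hi i -> phi sstar <= phi s) ->
  (forall x : 'I_n -> R, (forall i, lo i <= x i <= hi i) ->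
     \sum_(i < n) fu lo hi phi sstar i (x i) <= phi (\sum_(i < n) x i))
  /\
  (forall x : 'I_n -> R, (forall i, lo i <= x i <= hi i) ->
     (forall i, sstar + hi i - \sum_(j < n) hi j <= x i
                <= sstar + lo i - \sum_(j < n) lo j) ->
     \sum_(i < n) fu lo hi phi sstar i (x i) = phi sstar).
Proof.
move=> lo_le_hi some_wid_pos cvx sstar_in min_sstar; split=> x x_in.
  exact: sum_fu_le.
exact: sum_fu_id.
Qed.
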